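(* Let $\mathcal{G}=(\mathcal{V},\mathcal{E})$ be connected, $c\in\mathbb{R}^n$, $\bar c=\frac1n\sum_ic_i$. Set $x^0=c$ and for $t\ge0$ let $\lambda^t=\frac1{2m}\sum_{(i,j)\in\mathcal{E}}|x_i^t-x_j^t|$; choose $e=(i,j)\in\mathcal{E}$ uniformly at random (independently across iterations); if $x_i^t<x_j^t$ set $x_i^{t+1}=x_i^t+\lambda^t$, $x_j^{t+1}=x_j^t-\lambda^t$; otherwise set $x_i^{t+1}=x_i^t-\lambda^t$, $x_j^{t+1}=x_j^t+\lambda^t$; all other coordinates are unchanged. Then for all $k\ge0$ $$\mathbb{E}\big[\|\bar c\mathbf{1}-x^k\|^2\big]\le\Big(1-\frac{\alpha(\mathcal{G})}{2m^2}\Big)^k\|\bar c\mathbf{1}-x^0\|^2 .$$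
   Context: $\mathcal{G}$ is an undirected graph with vertices $\mathcal{V}=\{1,\dots,n\}$ and $m=|\mathcal{E}|$ edges, each edge $e=(i,j)$ having an arbitrary but fixed orientation. The Laplacian is $\mathbf{L}=\mathbf{A}^\top\mathbf{A}$, where $\mathbf{A}\in\mathbb{R}^{m\times n}$ has for edge $(i,j)$ a row with $1$ in column $i$, $-1$ in column $j$, zeros elsewhere; $\alpha(\mathcal{G})$ is the second smallest eigenvalue of $\mathbf{L}$. $\mathbf{1}$ is the all-ones vector and $\|\cdot\|$ the Euclidean norm. *)

From HB Require Import structures.
From mathcomp Require Import all_boot all_order all_algebra.
Set Implicit Arguments. Unset Strict Implicit. Unset Printing Implicit Defensive.
Import Order.TTheory GRing.Theory Num.Theory.
Local Open Scope ring_scope.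

Section Graph.
Variables (n m : nat) (E : 'I_m -> 'I_n * 'I_n).

Definition simple_graph : Prop :=
  (forall e, (E e).1 != (E e).2) /\
  (forall e f, ((E e == E f) || (E e == ((E f).2, (E f).1))) -> e = f).

Definition adj : rel 'I_n :=
  fun u v => [exists e : 'I_m, (E e == (u, v)) || (E e == (v, u))].

Definition connected_graph : Prop := forall u v : 'I_n, connect adj u v.

Variable R : rcfType.

Definition incidence : 'M[R]_(m, n) :=
  \matrix_(e < m, k < n) (((k == (E e).1)%:R) - ((k == (E e).2)%:R)).

Definition laplacian : 'M[R]_n := (incidence)^T *m incidence.

(* a is the second smallest eigenvalue (counted with multiplicity) of L:
   the characteristic polynomial splits as prod (X - mu_i) with
   mu_0 <= mu_1 <= ... and a = mu_1. *)
Definition second_smallest_eigenvalue (L : 'M[R]_n) (a : R) : Prop :=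
  exists s : seq R,
    [/\ sorted <=%R s, char_poly L = \prod_(r <- s) ('X - r%:P) & a = s`_1].

Definition lambda_step (x : 'I_n -> R) : R :=
  (2 * m%:R)^-1 * \sum_(e < m) `|x (E e).1 - x (E e).2|.

Definition step (x : 'I_n -> R) (e : 'I_m) : 'I_n -> R :=
  let i := (E e).1 in let j := (E e).2 in let l := lambda_step x in
  fun k => if k == i then (if x i < x j then x i + l else x i - l)
           else if k == j then (if x i < x j then x j - l else x j + l)
           else x k.

(* x^k along a sequence of chosen edges (in chronological order) *)
Definition run (c : 'I_n -> R) (s : seq 'I_m) : 'I_n -> R := foldl step c s.

Definition mean (c : 'I_n -> R) : R := (n%:R)^-1 * \sum_(i < n) c i.

Definition sqdist_to_mean (c x : 'I_n -> R) : R :=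
  \sum_(i < n) (mean c - x i) ^+ 2.

(* E[ || cbar 1 - x^k ||^2 ] with edges i.i.d. uniform over the m edges *)
Definition expected_sqdist (c : 'I_n -> R) (k : nat) : R :=
  \sum_(s : k.-tuple 'I_m) (m%:R ^+ k)^-1 * sqdist_to_mean c (run c s).

End Graph.

From HB Require Import structures.
From mathcomp Require Import all_boot all_order all_algebra.
From mathcomp Require Import complex.
From mathcomp Require Import ring lra.
Import Order.TTheory GRing.Theory Num.Theory.
Local Open Scope ring_scope.

(* A step along edge e = (i, j) preserves the sum of the coordinates and changes
   ||mu 1 - x||^2 by 2 l^2 - 2 l |x_i - x_j|, where l = lambda^t.  Averaging over the
   m edges, the expected decrease is 2 l^2 = (sum_e |x_i - x_j|)^2 / (2 m^2), which is
   at least sum_e (x_i - x_j)^2 / (2 m^2) = y L y^T / (2 m^2) for y = x - mu 1.  As y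
   is orthogonal to the null vector 1 of L, y L y^T >= alpha ||y||^2 (Courant-Fischer,
   proved by diagonalising L over R[i]).  So each step contracts the expected squared
   distance by the factor 1 - alpha / (2 m^2). *)

Set Implicit Arguments. Unset Strict Implicit. Unset Printing Implicit Defensive.

Lemma count_lt_nth1_le1 (R : realDomainType) (s : seq R) :
  sorted <=%R s -> (count (< s`_1)%R s <= 1)%N.
Proof.
by move=> ss; rewrite leqNgt; apply/negP => /(nth_count_lt 0 ss); rewrite ltxx.
Qed.

Lemma char_poly_conj (F : fieldType) n (P B : 'M[F]_n) : P \in unitmx ->
  char_poly (invmx P *m B *m P) = char_poly B.
Proof.
move=> Pu; rewrite /char_poly.
set Pp := map_mx polyC P; set Pi := map_mx polyC (invmx P).
have PiP : Pi *m Pp = 1%:M by rewrite -map_mxM mulVmx // map_mx1.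
have -> : char_poly_mx (invmx P *m B *m P) = Pi *m char_poly_mx B *m Pp.
  rewrite /char_poly_mx mulmxBr mulmxBl !map_mxM -/Pp -/Pi; congr (_ - _).
  by rewrite mul_mx_scalar -scalemxAl PiP scalemx1.
by rewrite !det_mulmx mulrAC -det_mulmx PiP det1 mul1r.
Qed.

Section Spectral.
Variables (C : numClosedFieldType) (n : nat) (B : 'M[C]_n).
Hypothesis B_normal : B \is normalmx.
Local Open Scope sesquilinear_scope.

Local Notation P := (spectralmx B).
Local Notation d := (spectral_diag B).

Lemma char_poly_spectral :
  char_poly B = \prod_(j < n) ('X - (d 0 j)%:P).
Proof.
rewrite {1}(orthomx_spectralP B_normal) char_poly_conj ?spectral_unit //.
rewrite char_poly_trig ?diag_mx_is_trig //.
by apply: eq_bigr => j _; rewrite mxE eqxx mulr1n.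
Qed.

Lemma spectral_dot (x y : 'rV[C]_n) :
  (x *m P^t*) *m (y *m P^t*)^t* = x *m y^t*.
Proof.
by rewrite trmx_mul map_mxM trmxCK mulmxA mulmxKtV ?spectral_unitarymx.
Qed.

Lemma spectral_quad (x : 'rV[C]_n) :
  (x *m B *m x^t*) 0 0 = \sum_j d 0 j * `|(x *m P^t*) 0 j| ^+ 2.
Proof.
rewrite {1}(orthomx_spectralP B_normal) invmx_unitary ?spectral_unitarymx //.
rewrite !mulmxA -(mulmxA _ P).
have -> : P *m x^t* = (x *m P^t*)^t* by rewrite trmx_mul map_mxM trmxCK.
set z := x *m P^t*; rewrite mxE; apply: eq_bigr => j _.
by rewrite mul_mx_diag !mxE normCK mulrAC mulrC.
Qed.

End Spectral.

(* At most one d j lies below a; since a > 0 it is the only one that u can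
   meet, so z, being orthogonal to u, vanishes there. *)
Lemma ortho_null_coord (C : numClosedFieldType) (I : finType) (d u z : I -> C)
    (a : C) :
  0 < a -> (forall j, d j \is Num.real) -> (#|[pred j | (d j < a)%R]| <= 1)%N ->
  (forall j, u j * d j = 0) -> (exists j, u j != 0) ->
  \sum_j z j * (u j)^* = 0 ->
  forall j, z j = 0 \/ a <= d j.
Proof.
move=> a_gt0 d_real small_le1 ud0 [j1 uj1_neq0] zu0 j.
have ge_a k : ~~ (d k < a) -> a <= d k.
  by rewrite (real_leNgt (gtr0_real a_gt0) (d_real k)).
have [dj_lt|/ge_a dj_ge] := boolP (d j < a); [left | by right].
have ge_a_other k : k != j -> a <= d k.
  move=> kj; apply: ge_a; apply/negP => dk_lt.
  by move: small_le1; rewrite leqNgt => /negP; apply; apply/card_gt1P; exists k, j.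
have u_other k : k != j -> u k = 0.
  move=> /ge_a_other dk_ge; have /eqP := ud0 k.
  by rewrite mulf_eq0 (gt_eqF (lt_le_trans a_gt0 dk_ge)) orbF => /eqP.
have uj_neq0 : u j != 0.
  apply: contraNneq uj1_neq0 => uj0; apply/eqP.
  by have [->|/u_other] := eqVneq j1 j.
move: zu0; rewrite (bigD1 j) //= big1 => [|k /u_other ->]; last first.
  by rewrite conjC0 mulr0.
by rewrite addr0 => /eqP; rewrite mulf_eq0 conjC_eq0 (negbTE uj_neq0) orbF => /eqP.
Qed.

Section RealSymmetric.
Variables (R : rcfType) (n : nat) (L : 'M[R]_n) (v : 'rV[R]_n) (s : seq R).
Hypotheses (L_sym : L^T = L) (vL0 : v *m L = 0) (v_neq0 : v != 0).
Hypotheses (s_sorted : sorted <=%R s)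
  (charL : char_poly L = \prod_(r <- s) ('X - r%:P)).
Local Open Scope sesquilinear_scope.

(* The spectral theorem is only available over a closed field, so L is
   diagonalised as a hermitian matrix over R[i]. *)
Local Notation toC := (real_complex R).
Local Notation Lc := (map_mx toC L).
Local Notation P := (spectralmx Lc).
Local Notation d := (spectral_diag Lc).

Lemma real_complex_trC p q (A : 'M[R]_(p, q)) :
  (map_mx toC A)^t* = map_mx toC A^T.
Proof.
by apply/matrixP => i j; rewrite !mxE conj_Creal // /real_complex_def complex_real.
Qed.

Lemma complexified_hermitian : Lc \is hermsymmx.
Proof. by apply/is_hermitianmxP; rewrite expr0 scale1r real_complex_trC L_sym. Qed.

Lemma complexified_normal : Lc \is normalmx.
Proof. exact/hermitian_normalmx/complexified_hermitian. Qed.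

Lemma complexified_spectrum_real j : d 0 j \is Num.real.
Proof. exact/mxOverP/hermitian_spectral_diag_real/complexified_hermitian. Qed.

Lemma complexified_spectrum_perm :
  perm_eq (map toC s) [seq d 0 j | j <- enum 'I_n].
Proof.
apply: prod_XsubC_eq; transitivity (char_poly Lc).
  rewrite -map_char_poly charL rmorph_prod big_map; apply: eq_bigr => r _.
  by rewrite rmorphB /= map_polyX map_polyC.
by rewrite big_map big_enum /= char_poly_spectral ?complexified_normal.
Qed.

Lemma complexified_spectrum_lt_nth1 :
  (#|[pred j | (d 0 j < toC s`_1)%R]| <= 1)%N.
Proof.
apply: leq_trans (count_lt_nth1_le1 s_sorted).
have -> : count (< s`_1)%R s = count (< toC s`_1)%R (map toC s).
  by rewrite count_map; apply: eq_count => r /=; rewrite ltcR.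
rewrite (permP complexified_spectrum_perm) count_map -sum1_count big_enum_cond.
by rewrite sum1_card.
Qed.

Lemma rayleigh_ortho_null (y : 'rV[R]_n) : 0 < s`_1 -> y *m v^T = 0 ->
  s`_1 * (y *m y^T) 0 0 <= (y *m L *m y^T) 0 0.
Proof.
move=> a_gt0 yv0.
pose z := map_mx toC y *m P^t*; pose u := map_mx toC v *m P^t*.
have coord j : z 0 j = 0 \/ toC s`_1 <= d 0 j.
  apply: (@ortho_null_coord _ _ (fun j => d 0 j) (fun j => u 0 j)).
  - by rewrite ltcR.
  - exact: complexified_spectrum_real.
  - exact: complexified_spectrum_lt_nth1.
  - move=> k; have : u *m diag_mx d = 0.
      have LcP : Lc *m P^t* = P^t* *m diag_mx d.
        rewrite {1}(orthomx_spectralP complexified_normal).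
        by rewrite invmx_unitary ?mulmxtVK ?spectral_unitarymx.
      by rewrite -mulmxA -LcP mulmxA -map_mxM vL0 map_mx0 !mul0mx.
    by move/rowP/(_ k); rewrite mul_mx_diag !mxE.
  - have u_neq0 : u != 0.
      apply: contraNneq v_neq0 => u0; rewrite -(map_mx_eq0 toC).
      rewrite -(mulmxKtV (map_mx toC v) (spectral_unitarymx Lc)) //.
      by rewrite -/u u0 mul0mx.
    have [k uk|u0] := pickP [pred k | u 0 k != 0]; first by exists k.
    case/eqP: u_neq0; apply/rowP => k; rewrite [RHS]mxE.
    by apply/eqP/negbFE; rewrite -(u0 k).
  - transitivity ((z *m u^t*) 0 0).
      by rewrite mxE; apply: eq_bigr => i _; rewrite !mxE.
    by rewrite spectral_dot real_complex_trC -map_mxM yv0 map_mx0 mxE.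
have quad : toC ((y *m L *m y^T) 0 0) = \sum_j d 0 j * `|z 0 j| ^+ 2.
  rewrite /z -spectral_quad ?complexified_normal //.
  by rewrite real_complex_trC -!map_mxM [RHS]mxE.
have norm : toC ((y *m y^T) 0 0) = \sum_j `|z 0 j| ^+ 2.
  transitivity ((z *m z^t*) 0 0); last first.
    by rewrite mxE; apply: eq_bigr => i _; rewrite !mxE normCK.
  by rewrite spectral_dot real_complex_trC -map_mxM [RHS]mxE.
rewrite -lecR rmorphM /= quad norm mulr_sumr; apply: ler_sum => j _.
case: (coord j) => [->|]; first by rewrite normr0 expr0n /= !mulr0.
by move=> /ler_wpM2r; apply; rewrite exprn_ge0.
Qed.
End RealSymmetric.

Lemma sum_indicator_mul (R : pzSemiRingType) (I : finType) (a : I) (f : I -> R) :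
  \sum_k (k == a)%:R * f k = f a.
Proof.
by rewrite (bigD1 a) //= eqxx mul1r big1 ?addr0 // => k /negbTE ->; rewrite mul0r.
Qed.

Section Laplacian.
Variables (R : rcfType) (n m : nat) (E : 'I_m -> 'I_n * 'I_n).
Local Notation A := (incidence E R).
Local Notation L := (laplacian E R).
Local Notation ones := (const_mx 1 : 'rV[R]_n).

Lemma incidence_mul_tr (x : 'rV[R]_n) e :
  (A *m x^T) e 0 = x 0 (E e).1 - x 0 (E e).2.
Proof.
rewrite mxE -!(sum_indicator_mul _ (fun k => x 0 k)) -sumrB; apply: eq_bigr => k _.
by rewrite !mxE mulrBl.
Qed.

Lemma laplacian_quad (x : 'rV[R]_n) :
  (x *m L *m x^T) 0 0 = \sum_e (x 0 (E e).1 - x 0 (E e).2) ^+ 2.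
Proof.
rewrite /laplacian mulmxA -mulmxA -[x *m A^T]trmxK trmx_mul trmxK mxE.
by apply: eq_bigr => e _; rewrite mxE incidence_mul_tr expr2.
Qed.

Lemma const1_laplacian : ones *m L = 0.
Proof.
have A1 : A *m ones^T = 0.
  by apply/matrixP => e i; rewrite ord1 incidence_mul_tr !mxE subrr.
by rewrite /laplacian mulmxA -[_ *m A^T]trmxK trmx_mul trmxK A1 trmx0 mul0mx.
Qed.

Lemma laplacian_rayleigh (alpha : R) (y : 'I_n -> R) : (0 < n)%N ->
  second_smallest_eigenvalue L alpha -> \sum_i y i = 0 ->
  alpha * \sum_i y i ^+ 2 <= \sum_e (y (E e).1 - y (E e).2) ^+ 2.
Proof.
move=> n_gt0 [s [s_sorted charL ->]] y_sum0.
have [a_le0|a_gt0] := lerP s`_1 0.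
  apply: le_trans (sumr_ge0 _ (fun e _ => sqr_ge0 _)).
  by rewrite mulr_le0_ge0 // sumr_ge0 // => i _; apply: sqr_ge0.
pose yr := \row_i y i.
have L_sym : L^T = L by rewrite /laplacian trmx_mul trmxK.
have one_neq0 : ones != 0.
  apply/eqP => /matrixP/(_ 0 (Ordinal n_gt0)); rewrite !mxE.
  exact/eqP/oner_neq0.
have yr_ortho : yr *m ones^T = 0.
  apply/rowP => i; rewrite ord1 !mxE -[RHS]y_sum0.
  by apply: eq_bigr => k _; rewrite !mxE mulr1.
have yr_norm : (yr *m yr^T) 0 0 = \sum_i y i ^+ 2.
  by rewrite mxE; apply: eq_bigr => i _; rewrite !mxE expr2.
have yr_quad : (yr *m L *m yr^T) 0 0 = \sum_e (y (E e).1 - y (E e).2) ^+ 2.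
  by rewrite laplacian_quad; apply: eq_bigr => e _; rewrite !mxE.
rewrite -yr_norm -yr_quad.
exact: (rayleigh_ortho_null L_sym const1_laplacian one_neq0 s_sorted charL
  a_gt0 yr_ortho).
Qed.
End Laplacian.

Lemma bigD2 (V : nmodType) (I : finType) (i j : I) (F : I -> V) : i != j ->
  \sum_k F k = F i + F j + \sum_(k | (k != i) && (k != j)) F k.
Proof.
move=> ij; rewrite (bigD1 i) //= (bigD1 j) 1?eq_sym //= addrA.
by congr (_ + _); apply: eq_bigl => k; rewrite andbC.
Qed.

Lemma sum_sqr_le_sqr_sum (R : realDomainType) (I : finType) (f : I -> R) :
  (forall i, 0 <= f i) -> \sum_i f i ^+ 2 <= (\sum_i f i) ^+ 2.
Proof.
move=> f_ge0; rewrite expr2 mulr_suml; apply: ler_sum => i _.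
rewrite mulr_sumr (bigD1 i) //= expr2 lerDl.
by apply: sumr_ge0 => j _; apply: mulr_ge0.
Qed.

Lemma sum_tuple_cons (T : finType) (V : nmodType) k (f : k.+1.-tuple T -> V) :
  \sum_(s : k.+1.-tuple T) f s =
  \sum_(e : T) \sum_(t : k.-tuple T) f (cons_tuple e t).
Proof.
rewrite pair_big /= (reindex (fun p : T * k.-tuple T => cons_tuple p.1 p.2)) //=.
exists (fun s => (thead s, behead_tuple s)).
  by move=> [e t] _; congr pair; apply: val_inj.
by move=> s _; rewrite [in RHS](tuple_eta s); apply: val_inj.
Qed.

Section Gossip.
Variables (R : rcfType) (n m : nat) (E : 'I_m -> 'I_n * 'I_n).
Hypothesis no_loop : forall e, (E e).1 != (E e).2.

Definition sqdev (mu : R) (x : 'I_n -> R) : R := \sum_k (mu - x k) ^+ 2.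

Lemma step_other (x : 'I_n -> R) e k : k != (E e).1 -> k != (E e).2 ->
  step E x e k = x k.
Proof. by move=> /negbTE k1 /negbTE k2; rewrite /step k1 k2. Qed.

Lemma sum_step (x : 'I_n -> R) e : \sum_k step E x e k = \sum_k x k.
Proof.
rewrite (bigD2 _ (no_loop e)) [RHS](bigD2 _ (no_loop e)).
rewrite (eq_bigr x) => [|k /andP[k1 k2]]; last exact: step_other.
rewrite /step eqxx eq_sym (negbTE (no_loop e)) eqxx.
by case: ifP => _; congr (_ + _); ring.
Qed.

Lemma sqdev_step (mu : R) (x : 'I_n -> R) e :
  sqdev mu (step E x e) = sqdev mu x + 2 * lambda_step E x ^+ 2
    - 2 * lambda_step E x * `|x (E e).1 - x (E e).2|.
Proof.
rewrite /sqdev (bigD2 _ (no_loop e)) [in RHS](bigD2 _ (no_loop e)).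
rewrite (eq_bigr (fun k => (mu - x k) ^+ 2)) => [|k /andP[k1 k2]]; last first.
  by rewrite step_other.
rewrite /step eqxx eq_sym (negbTE (no_loop e)) eqxx.
by case: (ltrP (x (E e).1) (x (E e).2)) => _; ring.
Qed.

Hypothesis m_gt0 : (0 < m)%N.

Lemma vertices_gt0 : (0 < n)%N.
Proof. exact: leq_ltn_trans (leq0n _) (ltn_ord (E (Ordinal m_gt0)).1). Qed.

Lemma mean_sqdev_step (mu : R) (x : 'I_n -> R) :
  \sum_e m%:R^-1 * sqdev mu (step E x e) =
  sqdev mu x - 2 * lambda_step E x ^+ 2.
Proof.
under eq_bigr do rewrite sqdev_step.
rewrite -mulr_sumr sumrB sumr_const card_ord -mulr_sumr.
have m_neq0 : m%:R != 0 :> R by rewrite pnatr_eq0 -lt0n.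
rewrite /lambda_step -mulr_natl; set S := \sum_e _; set F := sqdev _ _.
by field.
Qed.

Variable alpha : R.
Hypothesis alpha2 : second_smallest_eigenvalue (laplacian E R) alpha.
Local Notation rate := (1 - alpha / (2 * m%:R ^+ 2)).

Lemma mean_sqdev_step_le (mu : R) (x : 'I_n -> R) : \sum_k x k = n%:R * mu ->
  \sum_e m%:R^-1 * sqdev mu (step E x e) <= rate * sqdev mu x.
Proof.
move=> x_sum; rewrite mean_sqdev_step.
set S := \sum_e `|x (E e).1 - x (E e).2|.
have gap : alpha * sqdev mu x <= S ^+ 2.
  apply: le_trans (sum_sqr_le_sqr_sum (fun e => normr_ge0 _)).
  under [X in _ <= X]eq_bigr do rewrite real_normK ?num_real //.
  have y_sum0 : \sum_i (x i - mu) = 0.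
    by rewrite sumrB sumr_const card_ord x_sum mulr_natl subrr.
  rewrite /sqdev (eq_bigr (fun i => (x i - mu) ^+ 2)) => [|i _]; last first.
    by rewrite -sqrrN opprB.
  rewrite [X in _ <= X](eq_bigr
    (fun e => (x (E e).1 - mu - (x (E e).2 - mu)) ^+ 2)) => [|e _]; last first.
    by congr (_ ^+ 2); ring.
  exact: laplacian_rayleigh vertices_gt0 alpha2 y_sum0.
have m_neq0 : m%:R != 0 :> R by rewrite pnatr_eq0 -lt0n.
have K_ge0 : 0 <= (2 * m%:R ^+ 2)^-1 :> R by rewrite invr_ge0 mulr_ge0 ?exprn_ge0.
have : 0 <= (S ^+ 2 - alpha * sqdev mu x) * (2 * m%:R ^+ 2)^-1.
  by rewrite mulr_ge0 // subr_ge0.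
have -> : 2 * lambda_step E x ^+ 2 = S ^+ 2 * (2 * m%:R ^+ 2)^-1.
  by rewrite /lambda_step -/S; field.
set K := (2 * m%:R ^+ 2)^-1; nra.
Qed.

(* The contraction bound, applied to x = 1_i - 1_j for an edge (i, j), makes
   rate * sqdev 0 x nonnegative with sqdev 0 x > 0. *)
Lemma rate_ge0 : 0 <= rate.
Proof.
pose e0 := Ordinal m_gt0; pose i := (E e0).1; pose j := (E e0).2.
pose x k : R := (k == i)%:R - (k == j)%:R.
have x_sum : \sum_k x k = n%:R * 0.
  have ind a : \sum_k (k == a)%:R = 1 :> R.
    rewrite -[RHS](sum_indicator_mul a (fun=> 1)).
    by apply: eq_bigr => k _; rewrite mulr1.
  by rewrite mulr0 sumrB !ind subrr.
have x_pos : 0 < sqdev 0 x.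
  rewrite /sqdev (bigD1 i) //= /x eqxx (negbTE (no_loop e0)) subr0 sub0r.
  rewrite sqrrN expr1n.
  by rewrite (lt_le_trans ltr01) // lerDl sumr_ge0 // => k _; apply: sqr_ge0.
rewrite -(pmulr_lge0 _ x_pos); apply: le_trans (mean_sqdev_step_le x_sum).
apply: sumr_ge0 => e _; rewrite mulr_ge0 ?invr_ge0 // sumr_ge0 // => k _.
exact: sqr_ge0.
Qed.

Lemma expected_sqdev_run_le (mu : R) k (x : 'I_n -> R) :
  \sum_i x i = n%:R * mu ->
  \sum_(s : k.-tuple 'I_m) (m%:R ^+ k)^-1 * sqdev mu (run E x s)
    <= rate ^+ k * sqdev mu x.
Proof.
elim: k x => [|k IHk] x x_sum.
  rewrite (eq_bigr (fun _ => sqdev mu x)) => [|s _]; last first.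
    by rewrite (tuple0 s) expr0 invr1 mul1r.
  by rewrite sumr_const card_tuple expn0 expr0 mul1r.
rewrite sum_tuple_cons.
rewrite (eq_bigr (fun e => m%:R^-1 * \sum_(t : k.-tuple 'I_m)
    (m%:R ^+ k)^-1 * sqdev mu (run E (step E x e) t))) => [|e _]; last first.
  by rewrite mulr_sumr; apply: eq_bigr => t _; rewrite exprS invfM mulrA.
apply: (@le_trans _ _ (\sum_e m%:R^-1 * (rate ^+ k * sqdev mu (step E x e)))).
  by apply: ler_sum => e _; rewrite ler_wpM2l ?invr_ge0 // IHk // sum_step.
under eq_bigr do rewrite mulrCA.
rewrite -mulr_sumr [X in _ <= X * _]exprSr -mulrA.
by rewrite ler_wpM2l ?exprn_ge0 ?rate_ge0 ?(mean_sqdev_step_le x_sum).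
Qed.
End Gossip.

Theorem mainTheorem19 (R : rcfType) (n m : nat) (E : 'I_m -> 'I_n * 'I_n)
    (alpha : R) (c : 'I_n -> R) :
  (0 < m)%N ->
  simple_graph E ->
  connected_graph E ->
  second_smallest_eigenvalue (@laplacian n m E R) alpha ->
  forall k : nat,
    expected_sqdist E c k
      <= (1 - alpha / (2 * (m%:R) ^+ 2)) ^+ k * sqdist_to_mean c c.
Proof.
move=> m_gt0 [no_loop _] _ alpha2 k.
have c_sum : \sum_i c i = n%:R * mean c.
  by rewrite /mean mulrA mulfV ?mul1r // pnatr_eq0 -lt0n (vertices_gt0 E m_gt0).
exact: (expected_sqdev_run_le no_loop m_gt0 alpha2 k c_sum).
Qed.
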